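(* Let $A=(a_{ij})\in\mathbb R^{d\times d}_+$ have entries summing to $1$ and positive row sums $r(A)_i=\sum_ja_{ij}$, and let $p\in\Sigma_d$. Define $\tilde A\in\mathbb R^{d\times d}_+$ by $\tilde A_{ij}=\frac1z a_{ij}\sqrt{p_i/r(A)_i}$, where $z>0$ is chosen so that the entries of $\tilde A$ sum to $1$. Then $\|c(\tilde A)-c(A)\|_1\le\|r(\tilde A)-r(A)\|_1$.
   Context: For a matrix $M$, $r(M)$ is its vector of row sums and $c(M)$ its vector of column sums; $\Sigma_d$ is the probability simplex in $\mathbb R^d$; $\|\cdot\|_1$ is the $\ell_1$ norm. *)

From mathcomp Require Import all_boot all_order all_algebra.
Set Implicit Arguments. Unset Strict Implicit. Unset Printing Implicit Defensive.
Import Order.TTheory GRing.Theory Num.Theory.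
Local Open Scope ring_scope.

Definition rowsums (R : pzRingType) (d : nat) (M : 'M[R]_d) : 'I_d -> R :=
  fun i => \sum_(j < d) M i j.
Definition colsums (R : pzRingType) (d : nat) (M : 'M[R]_d) : 'I_d -> R :=
  fun j => \sum_(i < d) M i j.

Definition l1 (R : numDomainType) (d : nat) (v : 'I_d -> R) : R :=
  \sum_(i < d) `|v i|.

Definition in_simplex (R : numDomainType) (d : nat) (p : 'I_d -> R) : Prop :=
  (forall i, 0 <= p i) /\ \sum_(i < d) p i = 1.

Definition Araw (R : rcfType) (d : nat) (A : 'M[R]_d) (p : 'I_d -> R) : 'M[R]_d :=
  \matrix_(i, j) (A i j * Num.sqrt (p i / rowsums A i)).

Definition zconst (R : rcfType) (d : nat) (A : 'M[R]_d) (p : 'I_d -> R) : R :=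
  \sum_(i < d) \sum_(j < d) Araw A p i j.

Definition Atilde (R : rcfType) (d : nat) (A : 'M[R]_d) (p : 'I_d -> R) : 'M[R]_d :=
  \matrix_(i, j) (Araw A p i j / zconst A p).

(* Rescaling the rows of a nonnegative matrix by factors t_i changes row i by
   r(A)_i (t_i - 1), so the row sums move by sum_i r(A)_i |t_i - 1| in l1,
   while by the triangle inequality the column sums move by at most
   sum_i sum_j a_ij |t_i - 1|, which is the same quantity. *)

From mathcomp Require Import all_boot all_order all_algebra.
Import Order.TTheory GRing.Theory Num.Theory.
Local Open Scope ring_scope.

Section RowScaling.

Variables (R : numDomainType) (d : nat).
Implicit Types (M N A : 'M[R]_d) (u : 'rV[R]_d).

Lemma rowsumsB M N i : rowsums (M - N) i = rowsums M i - rowsums N i.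
Proof. by rewrite /rowsums -sumrB; apply: eq_bigr => j _; rewrite !mxE. Qed.

Lemma colsumsB M N j : colsums (M - N) j = colsums M j - colsums N j.
Proof. by rewrite /colsums -sumrB; apply: eq_bigr => i _; rewrite !mxE. Qed.

Lemma l1_colsums_le_sum_norm M :
  l1 (colsums M) <= \sum_(i < d) \sum_(j < d) `|M i j|.
Proof.
rewrite exchange_big /l1; apply: ler_sum => j _.
by rewrite /colsums; apply: ler_norm_sum.
Qed.

Lemma l1_rowsums_diag_mul A u : (forall i j, 0 <= A i j) ->
  l1 (rowsums (diag_mx u *m A)) = \sum_(i < d) \sum_(j < d) `|(diag_mx u *m A) i j|.
Proof.
move=> A_ge0; apply: eq_bigr => i _.
have row_scaled j : (diag_mx u *m A) i j = u 0 i * A i j by rewrite mul_diag_mx mxE.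
rewrite /rowsums; under eq_bigr => j _ do rewrite row_scaled.
rewrite -mulr_sumr normrM (ger0_norm (sumr_ge0 _ (fun j _ => A_ge0 i j))) mulr_sumr.
by apply: eq_bigr => j _; rewrite row_scaled normrM (ger0_norm (A_ge0 i j)).
Qed.

Lemma l1_colsums_le_rowsums_diag_mul A u : (forall i j, 0 <= A i j) ->
  l1 (colsums (diag_mx u *m A)) <= l1 (rowsums (diag_mx u *m A)).
Proof.
by move=> A_ge0; rewrite l1_rowsums_diag_mul //; apply: l1_colsums_le_sum_norm.
Qed.

End RowScaling.

Lemma Atilde_diag_mul (R : rcfType) (d : nat) (A : 'M[R]_d) (p : 'I_d -> R) :
  Atilde A p = diag_mx (\row_i (Num.sqrt (p i / rowsums A i) / zconst A p)) *m A.
Proof.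
by apply/matrixP => i j; rewrite mul_diag_mx !mxE -mulrA mulrC.
Qed.

Theorem lemma6 (R : rcfType) (d : nat) (A : 'M[R]_d) (p : 'I_d -> R) :
  (forall i j, 0 <= A i j) ->
  \sum_(i < d) \sum_(j < d) A i j = 1 ->
  (forall i, 0 < rowsums A i) ->
  in_simplex p ->
  l1 (fun j => colsums (Atilde A p) j - colsums A j)
    <= l1 (fun i => rowsums (Atilde A p) i - rowsums A i).
Proof.
move=> A_ge0 _ _ _.
set t := \row_i (Num.sqrt (p i / rowsums A i) / zconst A p).
have diffE : Atilde A p - A = diag_mx (t - const_mx 1) *m A.
  by rewrite Atilde_diag_mul linearB /= mulmxBl diag_const_mx mul_scalar_mx scale1r.
rewrite /l1.
under eq_bigr => j _ do rewrite -colsumsB diffE.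
under [X in _ <= X]eq_bigr => i _ do rewrite -rowsumsB diffE.
exact: l1_colsums_le_rowsums_diag_mul.
Qed.
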